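(* Let $f:A\to B$ be a map of simplicial objects in non-negatively graded complexes of abelian groups. Suppose: (a) for every $n$, $f_n:A_n\to B_n$ is a quasi-isomorphism; (b) for every simplicial set $S$, the map $f(S):A(S)\to B(S)$ is surjective; (c) for every degree $d$, the simplicial abelian groups $A^d$ and $B^d$ are contractible. Then for every injective map $\alpha:S\to T$ of simplicial sets, the induced map $$A(T)\to A(S)\times_{B(S)}B(T)$$ is a surjective quasi-isomorphism.
   Context: For a simplicial complex of abelian groups $A$ (equivalently, a complex of simplicial abelian groups $A^d$) and a simplicial set $S$, $A(S)$ is the complex with $A(S)^d=\mathrm{Hom}_{\mathrm{sSet}}(S,A^d)$; thus $A(\Delta^n)=A_n$ and $A(-)$ sends colimits of simplicial sets to limits. A simplicial abelian group is contractible if it is weakly equivalent to a point (all homotopy groups vanish). *)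

From HB Require Import structures.
From mathcomp Require Import all_boot all_order all_algebra.
Set Implicit Arguments. Unset Strict Implicit. Unset Printing Implicit Defensive.
Import GRing.Theory.
Local Open Scope ring_scope.

(** * The simplex category Delta: maps [m] -> [n] are monotone maps
      'I_m.+1 -> 'I_n.+1 *)
Definition monob (m n : nat) (f : {ffun 'I_m.+1 -> 'I_n.+1}) : bool :=
  [forall i : 'I_m.+1, forall j : 'I_m.+1, ((i <= j)%N ==> (f i <= f j)%N)].

Definition Dmap (m n : nat) := {f : {ffun 'I_m.+1 -> 'I_n.+1} | monob f}.

Lemma monob_id n : monob [ffun j : 'I_n.+1 => j].
Proof. by apply/forallP=> i; apply/forallP=> j; rewrite !ffunE; apply/implyP. Qed.

Definition did n : Dmap n n := exist (@monob n n) _ (monob_id n).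

Lemma monob_comp l m n (f : Dmap l m) (g : Dmap m n) :
  monob [ffun j => sval g (sval f j)].
Proof.
case: f g => [f hf] [g hg]; apply/forallP=> i; apply/forallP=> j; apply/implyP=> hij.
rewrite !ffunE /=.
have h1 := implyP (forallP (forallP hf i) j) hij.
exact: (implyP (forallP (forallP hg _) _) h1).
Qed.

Definition dcomp l m n (g : Dmap m n) (f : Dmap l m) : Dmap l n :=
  exist (@monob l n) _ (monob_comp f g).

Lemma monob_face k (i : 'I_k.+2) : monob [ffun j : 'I_k.+1 => lift i j].
Proof.
apply/forallP=> a; apply/forallP=> b; apply/implyP=> h.
by rewrite !ffunE /= leq_bump2.
Qed.

Definition face k (i : 'I_k.+2) : Dmap k k.+1 := exist (@monob k k.+1) _ (monob_face i).

Unset Implicit Arguments.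
Record sset := SSet {
  sob :> nat -> Type;
  sact : forall m n, Dmap m n -> sob n -> sob m;
  sact_id : forall n x, sact n n (did n) x = x;
  sact_comp : forall l m n (g : Dmap m n) (f : Dmap l m) x,
      sact l n (dcomp g f) x = sact l m f (sact m n g x) }.

Record smap (S T : sset) := SMap {
  smf :> forall n, S n -> T n;
  smf_nat : forall m n (f : Dmap m n) x,
      smf m (sact S m n f x) = sact T m n f (smf n x) }.

Definition sinjective (S T : sset) (a : smap S T) := forall n, injective (a n).

(** * Simplicial objects in non-negatively graded cochain complexes of abelian
      groups: cob d n = A^d_n; cdif : A^d -> A^{d+1} *)
Record scx := SCx {
  cob : nat -> nat -> zmodType;
  cact : forall d m n, Dmap m n -> cob d n -> cob d m;
  cact_sub : forall d m n (f : Dmap m n) x y,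
      cact d m n f (x - y) = cact d m n f x - cact d m n f y;
  cact_id : forall d n x, cact d n n (did n) x = x;
  cact_comp : forall d l m n (g : Dmap m n) (f : Dmap l m) x,
      cact d l n (dcomp g f) x = cact d l m f (cact d m n g x);
  cdif : forall d n, cob d n -> cob d.+1 n;
  cdif_sub : forall d n (x y : cob d n), cdif d n (x - y) = cdif d n x - cdif d n y;
  cdif_nat : forall d m n (f : Dmap m n) x, cdif d m (cact d m n f x) = cact d.+1 m n f (cdif d n x);
  cdif2 : forall d n x, cdif d.+1 n (cdif d n x) = 0 }.

Record scmap (A B : scx) := SCMap {
  scf :> forall d n, cob A d n -> cob B d n;
  scf_sub : forall d n x y, scf d n (x - y) = scf d n x - scf d n y;
  scf_nat : forall d m n (f : Dmap m n) x,
      scf d m (cact A d m n f x) = cact B d m n f (scf d n x);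
  scf_dif : forall d n x, scf d.+1 n (cdif A d n x) = cdif B d n (scf d n x) }.

Set Implicit Arguments.
(** * Abstract cochain complexes, with elements presented by a carrier,
      a membership predicate and an equality (pointwise) relation *)
Record pcx := PCx {
  pc : nat -> Type;
  pin : forall d, pc d -> Prop;
  peq : forall d, pc d -> pc d -> Prop;
  pzero : forall d, pc d;
  psub : forall d, pc d -> pc d -> pc d;
  pdif : forall d, pc d -> pc d.+1 }.

Definition pcycle (C : pcx) d (x : pc C d) :=
  pin x /\ peq (pdif x) (pzero C d.+1).

Definition pbdry (C : pcx) : forall d, pc C d -> Prop :=
  fun d => match d return pc C d -> Prop with
  | 0%N => fun x => peq x (pzero C 0)
  | d'.+1 => fun x => exists y : pc C d', pin y /\ peq (pdif y) x
  end.

(** g (assumed a chain map) induces an isomorphism on cohomology *)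
Definition quasi_iso (C D : pcx) (g : forall d, pc C d -> pc D d) :=
  (forall d (x : pc C d), pcycle x -> pbdry (g d x) -> pbdry x) /\
  (forall d (y : pc D d), pcycle y ->
     exists x : pc C d, pcycle x /\ pbdry (psub (g d x) y)).

Definition psurj (C D : pcx) (g : forall d, pc C d -> pc D d) :=
  forall d (y : pc D d), pin y -> exists x : pc C d, pin x /\ peq (g d x) y.

Definition level (A : scx) (n : nat) : pcx :=
  @PCx (fun d => cob A d n) (fun _ _ => True) (fun _ x y => x = y)
       (fun _ => 0) (fun _ x y => x - y) (fun d x => cdif A d n x).

Definition levelmap (A B : scx) (f : scmap A B) n :
  forall d, pc (level A n) d -> pc (level B n) d := fun d x => f d n x.

(** The complex A(S), A(S)^d = Hom_sSet(S, A^d) *)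
Definition cochain (A : scx) (S : sset) d := forall n, S n -> cob A d n.

Definition cnatural (A : scx) (S : sset) d (c : cochain A S d) :=
  forall m n (f : Dmap m n) x, c m (sact S m n f x) = cact A d m n f (c n x).

Definition ceq (A : scx) (S : sset) d (c c' : cochain A S d) :=
  forall n x, c n x = c' n x.

Definition ofS (A : scx) (S : sset) : pcx :=
  @PCx (cochain A S) (@cnatural A S) (@ceq A S)
       (fun d n x => 0) (fun d c c' n x => c n x - c' n x)
       (fun d c n x => cdif A d n (c n x)).

Definition ofSmap (A B : scx) (f : scmap A B) (S : sset) :
  forall d, pc (ofS A S) d -> pc (ofS B S) d :=
  fun d c n x => f d n (c n x).

Definition precomp (A : scx) (S T : sset) (a : smap S T) d (c : cochain A T d)
  : cochain A S d := fun n x => c n (smf S T a n x).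

Definition fibprod (A B : scx) (f : scmap A B) (S T : sset) (a : smap S T) : pcx :=
  @PCx (fun d => (cochain A S d * cochain B T d)%type)
       (fun d p => cnatural p.1 /\ cnatural p.2 /\
                   ceq (ofSmap f p.1) (precomp a p.2))
       (fun d p q => ceq p.1 q.1 /\ ceq p.2 q.2)
       (fun d => (fun n x => 0, fun n x => 0))
       (fun d p q => (fun n x => p.1 n x - q.1 n x, fun n x => p.2 n x - q.2 n x))
       (fun d p => (fun n x => cdif A d n (p.1 n x), fun n x => cdif B d n (p.2 n x))).

Definition gapmap (A B : scx) (f : scmap A B) (S T : sset) (a : smap S T) :
  forall d, pc (ofS A T) d -> pc (fibprod f a) d :=
  fun d c => (precomp a c, ofSmap f c).

(** * Contractible simplicial abelian groups: all homotopy groups vanish,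
      pi_k computed as homology of the normalized (Moore) complex
      N_k = cap_{i<k} ker d_i with differential d_k. *)
Definition nbdry (G : nat -> zmodType) (act : forall m n, Dmap m n -> G n -> G m)
  k (x : G k) :=
  exists y : G k.+1,
    (forall i : 'I_k.+2, (i < k.+1)%N -> act k k.+1 (face i) y = 0) /\
    act k k.+1 (face ord_max) y = x.

Definition contractible (G : nat -> zmodType)
  (act : forall m n, Dmap m n -> G n -> G m) :=
  (forall x : G 0%N, nbdry act x) /\
  (forall k (x : G k.+1),
     (forall i : 'I_k.+2, act k k.+1 (face i) x = 0) -> nbdry act x).

Definition scx_level_contractible (A : scx) (d : nat) :=
  contractible (fun m n f => cact A d m n f).

(* Let K be the kernel of f. Surjectivity of f on B(Delta^n) makes every f_n
   surjective, so by (a) every complex K_n is acyclic, and by the long exact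
   homotopy sequence every simplicial group K^d is contractible. The cocycles
   Z^d(K) are then contractible too: Z^0(K) = 0, and d : K^d -> Z^(d+1)(K) is
   onto with kernel Z^d(K). If p : G -> H is onto with contractible kernel, every
   square from an injection S -> T to p has a diagonal filler, built skeleton by
   skeleton by filling spheres in ker p. For p = f^d this is the surjectivity of
   the gap map; for p = d : K^d -> Z^(d+1)(K) it shows that the kernel of the gap
   map, the complex of cochains of K(T) vanishing on S, is acyclic. *)

From mathcomp Require Import all_boot all_order all_algebra zify.
From Stdlib Require Import ClassicalEpsilon Classical.

Set Implicit Arguments. Unset Strict Implicit. Unset Printing Implicit Defensive.
Import GRing.Theory.

Section SubMorphism.
Variables (U V : zmodType) (g : U -> V).
Hypothesis gB : {morph g : x y / (x - y)%R}.

Lemma sub_morph0 : g 0%R = 0%R.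
Proof. by rewrite -(subrr 0%R) gB subrr. Qed.

Lemma sub_morphN : {morph g : x / (- x)%R}.
Proof. by move=> x; rewrite -[(- x)%R]sub0r gB sub_morph0 sub0r. Qed.

Lemma sub_morphD : {morph g : x y / (x + y)%R}.
Proof. by move=> x y; rewrite -{1}[y]opprK gB sub_morphN opprK. Qed.

End SubMorphism.

(** * The simplex category *)

Lemma dmap_eq m n (f g : Dmap m n) : (forall i, sval f i = sval g i) -> f = g.
Proof. by move=> h; apply: val_inj; apply/ffunP. Qed.

Lemma dmap_mono m n (t : Dmap m n) (a b : 'I_m.+1) : a <= b -> sval t a <= sval t b.
Proof. by case: t => t /= ht h; apply: (implyP (forallP (forallP ht a) b)). Qed.

Definition dsurj m n (t : Dmap m n) := forall b, exists a, sval t a = b.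

(* Cofaces and codegeneracies indexed by naturals; [inord] makes them total. *)
Definition coface k i : Dmap k k.+1 := face (inord i).

Lemma monob_codegen k (i : 'I_k.+1) :
  monob [ffun j : 'I_k.+2 => (inord (unbump i j) : 'I_k.+1)].
Proof.
apply/forallP=> a; apply/forallP=> b; apply/implyP=> h.
have := ltn_ord i; have := ltn_ord a; have := ltn_ord b => hb ha hi.
by rewrite !ffunE /= !inordK; rewrite /unbump; lia.
Qed.

Definition codegen k i : Dmap k.+1 k :=
  exist (@monob k.+1 k) _ (monob_codegen (inord i : 'I_k.+1)).

Ltac simplex_identity := apply: dmap_eq => a; apply: val_inj;
  rewrite /dcomp /did /= !ffunE /=; have ha := ltn_ord a;
  rewrite ?ffunE /= ?inordK; rewrite /bump /unbump; try lia.

Lemma coface_coface k i j : i < j -> j <= k.+2 ->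
  dcomp (coface k.+1 j) (coface k i) = dcomp (coface k.+1 i) (coface k j.-1).
Proof. by move=> ? ?; simplex_identity. Qed.

Lemma codegen_coface k r : r <= k -> dcomp (codegen k r) (coface k r) = did k.
Proof. by move=> ?; simplex_identity. Qed.

Lemma codegen_coface_lt k i r : i < r -> r <= k.+1 ->
  dcomp (codegen k.+1 r) (coface k.+1 i) = dcomp (coface k i) (codegen k r.-1).
Proof. by move=> ? ?; simplex_identity. Qed.

Lemma dmap_factor_coface m k (t : Dmap m k.+1) (j : 'I_k.+2) :
  (forall a, sval t a != j) -> exists t' : Dmap m k, t = dcomp (coface k j) t'.
Proof.
move=> hj.
have hne a : nat_of_ord (sval t a) <> nat_of_ord j.
  by move=> e; move: (hj a); rewrite (val_inj e) eqxx.
have hr a : unbump j (sval t a) < k.+1.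
  by have := hne a; have := ltn_ord (sval t a); have := ltn_ord j; rewrite /unbump; lia.
have mo : monob [ffun a => (inord (unbump j (sval t a)) : 'I_k.+1)].
  apply/forallP=> a; apply/forallP=> b; apply/implyP=> h.
  by rewrite !ffunE /= !inordK //; have := dmap_mono t h; rewrite /unbump; lia.
exists (exist (@monob m k) _ mo).
apply: dmap_eq => a; apply: val_inj; rewrite /dcomp /= !ffunE /= !inordK //.
by have := hne a; have := ltn_ord (sval t a); have := ltn_ord j; rewrite /bump /unbump; lia.
Qed.

Lemma nonsurj_factor_coface m k (t : Dmap m k.+1) : ~ dsurj t ->
  exists (j : 'I_k.+2) (t' : Dmap m k), t = dcomp (coface k j) t'.
Proof.
move=> hns; have [j hj] : exists j, forall a, sval t a != j.
  apply: NNPP => h; apply: hns => j; apply: NNPP => h2; apply: h; exists j => a.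
  by apply/eqP => e; apply: h2; exists a.
by exists j; apply: dmap_factor_coface.
Qed.

Lemma dsurj_section m n (t : Dmap m n) (j : 'I_m.+1) : dsurj t ->
  exists d : Dmap n m, dcomp t d = did n /\ sval d (sval t j) = j.
Proof.
move=> hs.
pose dl b := if b == sval t j then j else odflt j [pick a | sval t a == b].
have hdl b : sval t (dl b) = b.
  rewrite /dl; case: eqP => [-> //|_]; case: pickP => [a /eqP //|h].
  by case: (hs b) => a ha; move: (h a); rewrite ha eqxx.
have mo : monob [ffun b => dl b].
  apply/forallP=> a; apply/forallP=> b; apply/implyP=> h; rewrite !ffunE.
  case: (leqP (dl a) (dl b)) => // hlt.
  have := dmap_mono t (ltnW hlt); rewrite !hdl => h2.
  have eab : a = b by apply: val_inj; apply/eqP; rewrite eqn_leq h h2.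
  by move: hlt; rewrite eab ltnn.
exists (exist (@monob n m) _ mo); split; last by rewrite /= ffunE /dl eqxx.
by apply: dmap_eq => b; rewrite /dcomp /did /= !ffunE.
Qed.

(* A surjective monotone self-map of a finite chain is injective, hence strictly
   increasing, hence the identity. *)
Lemma dsurj_endo_id n (t : Dmap n n) : dsurj t -> t = did n.
Proof.
move=> hs.
have [g hg] : exists g : 'I_n.+1 -> 'I_n.+1, cancel g (sval t).
  exists (fun b => odflt b [pick a | sval t a == b]) => b.
  case: pickP => [a /eqP //|h].
  by case: (hs b) => a ha; move: (h a); rewrite ha eqxx.
have [g' g1 g2] := inj_card_bij (can_inj hg) (leqnn _).
have tinj : injective (sval t).
  have tg x : sval t x = g' x by rewrite -{1}(g2 x) hg.
  by move=> x y e; rewrite -(g2 x) -(g2 y) -!tg e.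
have strict (a b : 'I_n.+1) : a < b -> sval t a < sval t b.
  move=> h; rewrite ltn_neqAle dmap_mono ?(ltnW h) // andbT.
  by apply/eqP=> e; move: h; rewrite (tinj _ _ (val_inj e)) ltnn.
have ge k (a : 'I_n.+1) : nat_of_ord a = k -> k <= sval t a.
  elim: k a => [//|k IH] a ha.
  have hk : k < n.+1 by have := ltn_ord a; lia.
  have := IH (Ordinal hk) erefl; have := strict (Ordinal hk) a.
  by rewrite /= ha ltnSn => /(_ isT); lia.
have eqv k (b : 'I_n.+1) : nat_of_ord b = k -> sval t b = b.
  elim/ltn_ind: k b => k IH b hb; case: (hs b) => a ha.
  have hab : a <= b by rewrite -[X in _ <= nat_of_ord X]ha; apply: ge.
  case: (ltnP a b) => h.
    have hak : nat_of_ord a < k by rewrite -hb.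
    by have := IH a hak a erefl; rewrite ha => e; move: h; rewrite -e ltnn.
  have eab : a = b by apply: val_inj; apply/eqP; rewrite eqn_leq hab h.
  by rewrite -{1}eab ha.
by apply: dmap_eq => b; rewrite /did /= ffunE; apply: eqv.
Qed.

(** * Simplicial abelian groups and Kan filling *)

Unset Implicit Arguments.
Record sgrp := SGrp {
  gob : nat -> zmodType;
  gact : forall m n, Dmap m n -> gob n -> gob m;
  gact_sub : forall m n f (x y : gob n), gact m n f (x - y)%R = (gact m n f x - gact m n f y)%R;
  gact_id : forall n x, gact n n (did n) x = x;
  gact_comp : forall l m n (g : Dmap m n) (f : Dmap l m) x,
      gact l n (dcomp g f) x = gact l m f (gact m n g x) }.
Set Implicit Arguments.
Arguments gact s {m n}.

Definition dface (G : sgrp) k i : gob G k.+1 -> gob G k := gact G (coface k i).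
Definition degen (G : sgrp) k r : gob G k -> gob G k.+1 := gact G (codegen k r).
Arguments dface {G} k i.
Arguments degen {G} k r.

Definition sub_closed (G : sgrp) (P : forall n, gob G n -> Prop) :=
  (forall n, P n 0%R) /\ (forall n x y, P n x -> P n y -> P n (x - y)%R) /\
  (forall m n (f : Dmap m n) x, P n x -> P m (gact G f x)).

(* Vanishing homotopy of the subgroup [P], as homology of its Moore complex
   with the last face as differential. *)
Definition moore_acyclic (G : sgrp) (P : forall n, gob G n -> Prop) :=
  (forall x : gob G 0, P 0 x ->
     exists y, P 1 y /\ dface 0 0 y = 0%R /\ dface 0 1 y = x) /\
  (forall k (x : gob G k.+1), P _ x -> (forall i, i <= k.+1 -> dface k i x = 0%R) ->
     exists y, P _ y /\ (forall i, i <= k.+1 -> dface k.+1 i y = 0%R) /\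
               dface k.+1 k.+2 y = x).

Definition full_sub (G : sgrp) n (x : gob G n) := True.

Lemma full_sub_closed G : sub_closed (@full_sub G).
Proof. by []. Qed.

Section SimplicialGroup.
Variable G : sgrp.

Lemma gact0 m n (f : Dmap m n) : gact G f 0%R = 0%R.
Proof. exact: sub_morph0 (gact_sub G m n f). Qed.

Lemma gactD m n (f : Dmap m n) x y : gact G f (x + y)%R = (gact G f x + gact G f y)%R.
Proof. exact: sub_morphD (gact_sub G m n f) x y. Qed.

Lemma dfaceB k i (x y : gob G k.+1) : dface k i (x - y)%R = (dface k i x - dface k i y)%R.
Proof. exact: gact_sub. Qed.

Lemma dfaceD k i (x y : gob G k.+1) : dface k i (x + y)%R = (dface k i x + dface k i y)%R.
Proof. exact: gactD. Qed.

Lemma dface0 k i : dface (G:=G) k i 0%R = 0%R.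
Proof. exact: gact0. Qed.

Lemma degen0 k i : degen (G:=G) k i 0%R = 0%R.
Proof. exact: gact0. Qed.

Lemma dface_dface k i j (w : gob G k.+2) : i < j -> j <= k.+2 ->
  dface k i (dface k.+1 j w) = dface k j.-1 (dface k.+1 i w).
Proof. by move=> ? ?; rewrite /dface -!gact_comp coface_coface. Qed.

Lemma dface_degen k r (x : gob G k) : r <= k -> dface k r (degen k r x) = x.
Proof. by move=> ?; rewrite /dface /degen -gact_comp codegen_coface // gact_id. Qed.

Lemma dface_degen_lt k i r (x : gob G k.+1) : i < r -> r <= k.+1 ->
  dface k.+1 i (degen k.+1 r x) = degen k r.-1 (dface k i x).
Proof. by move=> ? ?; rewrite /dface /degen -!gact_comp codegen_coface_lt. Qed.

(* Faces of a would-be [k.+1]-simplex, indexed by [i <= k.+1]. *)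
Definition compatible_faces k : (nat -> gob G k) -> Prop :=
  match k with
  | 0 => fun _ => True
  | k'.+1 => fun z => forall i j, i < j -> j <= k'.+2 ->
               dface k' i (z j) = dface k' j.-1 (z i)
  end.

Unset Implicit Arguments.
Variable P : forall n, gob G n -> Prop.
Set Implicit Arguments.
Hypothesis P_closed : sub_closed P.

Lemma subP0 n : P n 0%R. Proof. by case: P_closed. Qed.

Lemma subPB n x y : P n x -> P n y -> P n (x - y)%R.
Proof. by case: P_closed => _ [hB _]; apply: hB. Qed.

Lemma subP_act m n (f : Dmap m n) x : P n x -> P m (gact G f x).
Proof. by case: P_closed => _ [_ hact]; apply: hact. Qed.

Lemma subPD n x y : P n x -> P n y -> P n (x + y)%R.
Proof.
move=> hx hy; rewrite -[y]opprK; apply: subPB => //.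
by rewrite -sub0r; apply: subPB => //; apply: subP0.
Qed.

Lemma trivial_sub_acyclic : (forall n x, P n x -> x = 0%R) -> moore_acyclic P.
Proof.
move=> P_eq0; split.
  move=> x hx; exists 0%R; rewrite !dface0 (P_eq0 _ _ hx).
  by split => //; apply: subP0.
move=> k x hx _; exists 0%R; split; first exact: subP0.
by split; [move=> i _; rewrite dface0 | rewrite dface0 (P_eq0 _ _ hx)].
Qed.

Lemma horn_fill0 (z : gob G 0) : P 0 z -> exists w, P 1 w /\ dface 0 0 w = z.
Proof. by move=> h; exists (degen 0 0 z); split; [apply: subP_act | apply: dface_degen]. Qed.

(* Kan condition for the horn missing the last face: fill the faces [0..r] one at
   a time, correcting the [r.+1]-st face with a degeneracy. *)
Lemma horn_fill k (z : nat -> gob G k.+1) : (forall i, i <= k.+1 -> P _ (z i)) ->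
  (forall i j, i < j -> j <= k.+1 -> dface k i (z j) = dface k j.-1 (z i)) ->
  exists w, P _ w /\ forall i, i <= k.+1 -> dface k.+1 i w = z i.
Proof.
move=> hz hc.
suff: forall r, r <= k.+1 ->
    exists w, P _ w /\ forall i, i <= r -> dface k.+1 i w = z i.
  by move/(_ k.+1 (leqnn _)).
elim=> [_|r IH hr].
  exists (degen k.+1 0 (z 0)); split; first by apply: subP_act; apply: hz.
  by move=> i; rewrite leqn0 => /eqP ->; rewrite dface_degen.
have [w [Pw hw]] := IH (ltnW hr).
exists (w - degen k.+1 r.+1 (dface k.+1 r.+1 w - z r.+1))%R; split.
  by apply: subPB => //; apply: subP_act; apply: subPB; [apply: subP_act | apply: hz].
move=> i hi; rewrite dfaceB.
case: (ltnP i r.+1) => hir.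
  have hr2 : r.+1 <= k.+2 by apply: leqW.
  rewrite dface_degen_lt // dfaceB dface_dface // (hw i) // (hc i r.+1) //=.
  by rewrite subrr degen0 subr0.
have -> : i = r.+1 by apply/eqP; rewrite eqn_leq hi hir.
by rewrite dface_degen // opprB addrC subrK.
Qed.

Hypothesis P_acyclic : moore_acyclic P.

Lemma sphere_fill0 (z0 z1 : gob G 0) : P 0 z0 -> P 0 z1 ->
  exists w, P 1 w /\ dface 0 0 w = z0 /\ dface 0 1 w = z1.
Proof.
move=> h0 h1; have [w [Pw hw]] := horn_fill0 h0.
have [y [Py [y0 y1]]] := P_acyclic.1 (z1 - dface 0 1 w)%R (subPB h1 (subP_act _ Pw)).
exists (w + y)%R; split; first exact: subPD.
by rewrite !dfaceD hw y0 y1 addr0 addrC subrK.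
Qed.

(* Fill the horn, then correct the last face by a Moore cycle. *)
Lemma sphere_fill k (z : nat -> gob G k) : (forall i, i <= k.+1 -> P _ (z i)) ->
  compatible_faces z ->
  exists w, P _ w /\ forall i, i <= k.+1 -> dface k i w = z i.
Proof.
case: k z => [|k] z hz hc.
  have [w [Pw [w0 w1]]] := sphere_fill0 (hz 0 erefl) (hz 1 erefl).
  by exists w; split => // i; rewrite leq_eqVlt ltnS leqn0 => /orP [] /eqP ->.
have [w [Pw hw]] := horn_fill (fun i h => hz i (leqW h)) (fun i j h1 h2 => hc i j h1 (leqW h2)).
have Pu : P _ (z k.+2 - dface k.+1 k.+2 w)%R by apply: subPB (hz _ (leqnn _)) (subP_act _ Pw).
have hu i : i <= k.+1 -> dface k i (z k.+2 - dface k.+1 k.+2 w)%R = 0%R.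
  by move=> hi; rewrite dfaceB hc // dface_dface // hw //= subrr.
have [y [Py [y0 y1]]] := P_acyclic.2 k _ Pu hu.
exists (w + y)%R; split; first exact: subPD.
move=> i hi; rewrite dfaceD.
case: (ltnP i k.+2) => h; first by rewrite hw // y0 // addr0.
have -> : i = k.+2 by apply/eqP; rewrite eqn_leq hi h.
by rewrite y1 addrC subrK.
Qed.

End SimplicialGroup.

(** * Kernels of surjections of simplicial groups *)

Section Surjection.
Unset Implicit Arguments.
Variables G H : sgrp.
Variable p : forall n, gob G n -> gob H n.
Hypothesis p_sub : forall n x y, p n (x - y)%R = (p n x - p n y)%R.
Hypothesis p_nat : forall m n (f : Dmap m n) x, p m (gact G f x) = gact H f (p n x).
Variable PG : forall n, gob G n -> Prop.
Variable QH : forall n, gob H n -> Prop.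
Set Implicit Arguments.
Hypothesis PG_closed : sub_closed PG.

Definition kerP n x := PG n x /\ p n x = 0%R.

Lemma p0 n : p n 0%R = 0%R.
Proof. exact: sub_morph0 (p_sub n). Qed.

Lemma pD n x y : p n (x + y)%R = (p n x + p n y)%R.
Proof. exact: sub_morphD (p_sub n) x y. Qed.

Lemma p_dface k i x : p k (dface k i x) = dface k i (p k.+1 x).
Proof. exact: p_nat. Qed.

Lemma kerP_closed : sub_closed kerP.
Proof.
split; first by move=> n; split; [apply: subP0 | apply: p0].
split.
  by move=> n x y [h1 h2] [h3 h4]; split; [apply: subPB | rewrite p_sub h2 h4 subrr].
by move=> m n f x [h1 h2]; split; [apply: subP_act | rewrite p_nat h2 gact0].
Qed.

Hypothesis p_PQ : forall n x, PG n x -> QH n (p n x).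
Hypothesis p_surj : forall n y, QH n y -> exists x, PG n x /\ p n x = y.

(* Lift first, then make the first faces vanish by subtracting a horn filler in the kernel. *)
Lemma lift_normalized k (z : gob H k.+1) : QH _ z ->
  (forall i, i <= k -> dface k i z = 0%R) ->
  exists z', PG _ z' /\ p _ z' = z /\ forall i, i <= k -> dface k i z' = 0%R.
Proof.
move=> hz hf; have [z0 [Pz0 ez0]] := p_surj hz.
have Nz0 i : i <= k -> kerP (dface k i z0).
  by move=> hi; split; [apply: subP_act | rewrite p_dface ez0 hf].
have [h [[Ph ph] hh]] : exists h, kerP h /\ forall i, i <= k -> dface k i h = dface k i z0.
  case: k z hz hf z0 Pz0 ez0 Nz0 => [|k] z hz hf z0 Pz0 ez0 Nz0.
    have [h [Nh hh]] := horn_fill0 kerP_closed (Nz0 0 erefl).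
    by exists h; split => // i; rewrite leqn0 => /eqP ->.
  apply: (horn_fill kerP_closed Nz0) => i j h1 h2.
  by rewrite dface_dface //; apply: leqW.
exists (z0 - h)%R; split; first exact: subPB.
split; first by rewrite p_sub ez0 ph subr0.
by move=> i hi; rewrite dfaceB hh // subrr.
Qed.

Lemma kerP_acyclic : moore_acyclic PG -> moore_acyclic QH -> moore_acyclic kerP.
Proof.
move=> CG CH; split.
  move=> x [Px px].
  have [y [Py [y0 y1]]] := CG.1 x Px.
  have hf i : i <= 1 -> dface 0 i (p 1 y) = 0%R.
    by rewrite leq_eqVlt ltnS leqn0 => /orP [] /eqP ->; rewrite -p_dface ?y1 // y0 p0.
  have [z [Qz [zf zl]]] := CH.2 0 _ (p_PQ Py) hf.
  have [z' [Pz' [pz' zf']]] := lift_normalized Qz zf.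
  exists (y - dface 1 2 z')%R; split.
    split; first by apply: subPB => //; apply: subP_act.
    by rewrite p_sub p_dface pz' zl subrr.
  split; first by rewrite dfaceB y0 dface_dface // zf' // dface0 subrr.
  by rewrite dfaceB y1 dface_dface //= zf' // dface0 subr0.
move=> k x [Px px] hx.
have [y [Py [yf yl]]] := CG.2 k x Px hx.
have hf i : i <= k.+2 -> dface k.+1 i (p _ y) = 0%R.
  move=> hi; rewrite -p_dface; case: (ltnP i k.+2) => h; first by rewrite yf // p0.
  have -> : i = k.+2 by apply/eqP; rewrite eqn_leq hi h.
  by rewrite yl.
have [z [Qz [zf zl]]] := CH.2 k.+1 _ (p_PQ Py) hf.
have [z' [Pz' [pz' zf']]] := lift_normalized Qz zf.
exists (y - dface k.+2 k.+3 z')%R; split.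
  split; first by apply: subPB => //; apply: subP_act.
  by rewrite p_sub p_dface pz' zl subrr.
split; last by rewrite dfaceB yl dface_dface //= zf' // dface0 subr0.
move=> i hi; have h1 : i < k.+3 by lia.
by rewrite dfaceB yf // dface_dface //= zf' // dface0 subrr.
Qed.

Lemma quotient_acyclic : moore_acyclic PG -> moore_acyclic kerP -> moore_acyclic QH.
Proof.
move=> CG CN; split.
  move=> x Qx; have [u [Pu pu]] := p_surj Qx.
  have [y [Py [y0 y1]]] := CG.1 u Pu.
  exists (p _ y); split; first exact: p_PQ.
  by rewrite -!p_dface y0 y1 p0.
move=> k x Qx hx.
have [u1 [Pu1 [pu1 fu1]]] := lift_normalized Qx (fun i h => hx i (leqW h)).
have Nv0 : kerP (dface k k.+1 u1) by split; [apply: subP_act | rewrite p_dface pu1 hx].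
have [v [[Pv pv] [vf vl]]] : exists v, kerP v /\
    (forall i, i <= k -> dface k i v = 0%R) /\ dface k k.+1 v = dface k k.+1 u1.
  case: k x Qx hx u1 Pu1 pu1 fu1 Nv0 => [|k] x Qx hx u1 Pu1 pu1 fu1 Nv0.
    have [v [Nv [v0 v1]]] := CN.1 _ Nv0.
    by exists v; split => //; split => // i; rewrite leqn0 => /eqP ->.
  have hf i : i <= k.+1 -> dface k i (dface k.+1 k.+2 u1) = 0%R.
    by move=> hi; rewrite dface_dface //= fu1 // dface0.
  have [v [Nv [vf vl]]] := CN.2 k _ Nv0 hf.
  by exists v.
have hf i : i <= k.+1 -> dface k i (u1 - v)%R = 0%R.
  move=> hi; rewrite dfaceB; case: (ltnP i k.+1) => h; first by rewrite fu1 // vf // subrr.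
  have -> : i = k.+1 by apply/eqP; rewrite eqn_leq hi h.
  by rewrite vl subrr.
have [y [Py [yf yl]]] := CG.2 k _ (subPB PG_closed Pu1 Pv) hf.
exists (p _ y); split; first exact: p_PQ.
split; first by move=> i hi; rewrite -p_dface yf // p0.
by rewrite -p_dface yl p_sub pu1 pv subr0.
Qed.

End Surjection.

(** * Relative lifting along an injection of simplicial sets *)

Section RelativeLift.
Unset Implicit Arguments.
Variables G H : sgrp.
Variable p : forall n, gob G n -> gob H n.
Hypothesis p_sub : forall n x y, p n (x - y)%R = (p n x - p n y)%R.
Hypothesis p_nat : forall m n (f : Dmap m n) x, p m (gact G f x) = gact H f (p n x).
Variable PG : forall n, gob G n -> Prop.
Variable QH : forall n, gob H n -> Prop.
Hypothesis PG_closed : sub_closed PG.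
Hypothesis p_surj : forall n y, QH n y -> exists x, PG n x /\ p n x = y.
Hypothesis ker_acyclic : moore_acyclic (kerP p PG).

Variables S T : sset.
Variable alpha : smap S T.
Hypothesis alpha_inj : sinjective S T alpha.
Variable a : forall n, S n -> gob G n.
Hypothesis a_nat : forall m n (f : Dmap m n) x, a m (sact S m n f x) = gact G f (a n x).
Hypothesis a_P : forall n x, PG n (a n x).
Variable b : forall n, T n -> gob H n.
Hypothesis b_nat : forall m n (f : Dmap m n) x, b m (sact T m n f x) = gact H f (b n x).
Hypothesis b_Q : forall n x, QH n (b n x).
Hypothesis pab : forall n x, p n (a n x) = b n (alpha n x).
Set Implicit Arguments.

(* [rel_skel n] is the simplicial subset of [T] generated by [alpha(S)] and the
   simplices of dimension [< n]. *)
Definition rel_skel n m (y : T m) : Prop := (exists s, alpha m s = y) \/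
  exists k, k < n /\ exists (x : T k) (t : Dmap m k), y = sact T m k t x.
Arguments rel_skel n m y : clear implicits.

Lemma rel_skel_act n l m (g : Dmap l m) y :
  rel_skel n m y -> rel_skel n l (sact T l m g y).
Proof.
case=> [[s <-]|[k [hk [x [t ->]]]]].
  by left; exists (sact S l m g s); rewrite smf_nat.
by right; exists k; split => //; exists x, (dcomp t g); rewrite sact_comp.
Qed.

Lemma rel_skel_mono n n' m y : n <= n' -> rel_skel n m y -> rel_skel n' m y.
Proof.
move=> h [h1|[k [hk h2]]]; [by left | right; exists k; split => //].
exact: leq_trans hk h.
Qed.

Lemma rel_skel_dim m y : rel_skel m.+1 m y.
Proof. by right; exists m; split => //; exists y, (did m); rewrite sact_id. Qed.

Lemma rel_skel_face k i (x : T k.+1) : rel_skel k.+1 k (sact T k k.+1 (coface k i) x).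
Proof. exact: rel_skel_dim. Qed.

Definition partial_lift n (c : forall m, T m -> gob G m) :=
  (forall m y, rel_skel n m y -> PG m (c m y)) /\ (forall m s, c m (alpha m s) = a m s) /\
  (forall m y, rel_skel n m y -> p m (c m y) = b m y) /\
  (forall l m (g : Dmap l m) y, rel_skel n m y -> c l (sact T l m g y) = gact G g (c m y)).

Definition lift_on_S m (y : T m) : gob G m :=
  match excluded_middle_informative (exists s, alpha m s = y) with
  | left h => a m (proj1_sig (constructive_indefinite_description _ h))
  | right _ => 0%R
  end.

Lemma lift_on_S_alpha m s : lift_on_S (alpha m s) = a m s.
Proof.
rewrite /lift_on_S; case: excluded_middle_informative => [h|h]; last by case: h; exists s.
by case: constructive_indefinite_description => s' /= hs; rewrite (alpha_inj m _ _ hs).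
Qed.

Lemma partial_lift0 : partial_lift 0 lift_on_S.
Proof.
split; first by move=> m y [[s <-]|[k []]] //; rewrite lift_on_S_alpha.
split; first exact: lift_on_S_alpha.
split; first by move=> m y [[s <-]|[k []]] //; rewrite lift_on_S_alpha.
by move=> l m g y [[s <-]|[k []]] //; rewrite -smf_nat !lift_on_S_alpha a_nat.
Qed.

Lemma nonskel_act_surj n l (t : Dmap l n) (x : T n) :
  ~ rel_skel n l (sact T l n t x) -> dsurj t.
Proof.
move=> hU; apply: NNPP => hns; apply: hU.
case: n t x hns => [|k] t x hns.
  by case: hns => j; exists ord0; rewrite (ord1 j) (ord1 (sval t ord0)).
have [j [t' ->]] := nonsurj_factor_coface hns.
by rewrite sact_comp; apply: rel_skel_act; apply: rel_skel_face.
Qed.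

Lemma surj_act_nonskel n l (t : Dmap l n) (x : T n) :
  ~ rel_skel n n x -> dsurj t -> ~ rel_skel n l (sact T l n t x).
Proof.
move=> hx hs hU; have [d [hd _]] := dsurj_section ord0 hs; apply: hx.
by rewrite -[x](sact_id T n) -hd sact_comp; apply: rel_skel_act.
Qed.

(* Eilenberg-Zilber: a simplex outside [rel_skel n] has a unique expression as
   a (necessarily surjective) degeneracy of an [n]-simplex outside [rel_skel n]. *)
Lemma nonskel_decomp_unique n (x x' : T n) m (t t' : Dmap m n) :
  ~ rel_skel n n x -> ~ rel_skel n n x' -> sact T m n t x = sact T m n t' x' ->
  ~ rel_skel n m (sact T m n t x) -> x = x' /\ t = t'.
Proof.
move=> hx hx' e hU; have hs := nonskel_act_surj hU.
have key (d : Dmap n m) : dcomp t d = did n -> dcomp t' d = did n /\ x = x'.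
  move=> hd.
  have ex : x = sact T n n (dcomp t' d) x' by rewrite sact_comp -e -sact_comp hd sact_id.
  have hr : dcomp t' d = did n.
    by apply: dsurj_endo_id; apply: (nonskel_act_surj (x := x')); rewrite -ex.
  by split => //; rewrite ex hr sact_id.
have [d0 [hd0 _]] := dsurj_section ord0 hs.
split; first exact: (key d0 hd0).2.
apply: dmap_eq => j; have [d [hd hdj]] := dsurj_section j hs.
have := f_equal (fun r : Dmap n n => sval r (sval t j)) (key d hd).1.
by rewrite /dcomp /did /= !ffunE hdj => ->.
Qed.

Definition simplex_filler n c (x : T n) w :=
  PG n w /\ p n w = b n x /\
  forall l (t : Dmap l n), rel_skel n l (sact T l n t x) -> c l (sact T l n t x) = gact G t w.
Arguments simplex_filler n c x w : clear implicits.

Lemma filler_faces_compatible n c (x : T n.+1) w :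
  partial_lift n.+1 c ->
  compatible_faces (fun i => c n (sact T n n.+1 (coface n i) x) - dface n i w)%R.
Proof.
case: n x w => [//|k] x w [_ [_ [_ c_nat]]] i j h1 h2 /=.
rewrite !dfaceB dface_dface // /dface -!c_nat; try exact: rel_skel_face.
by rewrite -!sact_comp coface_coface.
Qed.

(* Lift [b x] arbitrarily, then correct it by a kernel element with the
   prescribed boundary, which exists since the kernel is acyclic. *)
Lemma simplex_filler_exists n c (x : T n) :
  partial_lift n c -> ~ rel_skel n n x -> exists w, simplex_filler n c x w.
Proof.
move=> hc hx; have [c_P [_ [c_p c_nat]]] := hc.
have [w1 [Pw1 pw1]] := p_surj _ _ (b_Q _ x).
case: n c x hc c_P c_p c_nat hx w1 Pw1 pw1 => [|k] c x hc c_P c_p c_nat hx w1 Pw1 pw1.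
  exists w1; split => //; split => // l t hU; exfalso; apply: (surj_act_nonskel hx _ hU).
  by move=> j; exists ord0; rewrite (ord1 j) (ord1 (sval t ord0)).
pose e i := (c k (sact T k k.+1 (coface k i) x) - dface k i w1)%R.
have Ne i : kerP p PG (e i).
  split; first by apply: subPB => //; [apply: c_P; apply: rel_skel_face | apply: subP_act].
  rewrite p_sub c_p; last exact: rel_skel_face.
  by rewrite (p_dface p_nat) pw1 /dface b_nat subrr.
have [w2 [[Pw2 pw2] hw2]] :=
  sphere_fill (kerP_closed p_sub p_nat PG_closed) ker_acyclic (fun i _ => Ne i)
    (filler_faces_compatible x w1 hc).
exists (w1 + w2)%R; split; first exact: subPD.
split; first by rewrite (pD p_sub) pw1 pw2 addr0.
move=> l t hU.
have hns : ~ dsurj t by move=> hs; apply: (surj_act_nonskel hx hs hU).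
have [j [t' ->]] := nonsurj_factor_coface hns.
rewrite sact_comp c_nat; last exact: rel_skel_face.
rewrite gact_comp -/(dface _ _ _) dfaceD hw2; last by rewrite -ltnS.
by rewrite /e addrC subrK.
Qed.

Definition extend_lift n c (W : T n -> gob G n) m (y : T m) : gob G m :=
  match excluded_middle_informative (rel_skel n m y) with
  | left _ => c m y
  | right _ =>
    match excluded_middle_informative
      (exists xt : T n * Dmap m n, ~ rel_skel n n xt.1 /\ y = sact T m n xt.2 xt.1) with
    | left h => let xt := proj1_sig (constructive_indefinite_description _ h) in
                gact G xt.2 (W xt.1)
    | right _ => 0%R
    end
  end.
Arguments extend_lift n c W m y : clear implicits.

Lemma extend_lift_skel n c W m (y : T m) : rel_skel n m y -> extend_lift n c W m y = c m y.
Proof. by move=> h; rewrite /extend_lift; case: excluded_middle_informative. Qed.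

Lemma extend_lift_nonskel n c W m (y : T m) (x : T n) t :
  ~ rel_skel n m y -> ~ rel_skel n n x -> y = sact T m n t x ->
  extend_lift n c W m y = gact G t (W x).
Proof.
move=> hy hx ey; rewrite /extend_lift.
case: excluded_middle_informative => [//|_].
case: excluded_middle_informative => [h|h]; last by case: h; exists (x, t).
case: constructive_indefinite_description => [[x' t']] /= [hx' ey'].
have e2 : sact T m n t' x' = sact T m n t x by rewrite -ey' -ey.
have hU2 : ~ rel_skel n m (sact T m n t' x') by rewrite -ey'.
by have [-> ->] := nonskel_decomp_unique hx' hx e2 hU2.
Qed.

Lemma rel_skel_succ_decomp n m (y : T m) : rel_skel n.+1 m y -> ~ rel_skel n m y ->
  exists x t, ~ rel_skel n n x /\ y = sact T m n t x.
Proof.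
move=> [h|[k [hk [x [t ey]]]]] hn; first by case: hn; left.
case: (ltnP k n) => hkn.
  by case: hn; right; exists k; split => //; exists x, t.
have ekn : k = n by apply/eqP; rewrite eqn_leq hkn andbT -ltnS.
subst k; exists x, t; split => // hx; apply: hn; rewrite ey; exact: rel_skel_act.
Qed.

Lemma partial_lift_succ n c : partial_lift n c ->
  exists c', partial_lift n.+1 c' /\ forall m y, rel_skel n m y -> c' m y = c m y.
Proof.
move=> hc.
have hW (x : T n) : exists w, ~ rel_skel n n x -> simplex_filler n c x w.
  case: (classic (rel_skel n n x)) => h; first by exists 0%R.
  by have [w hw] := simplex_filler_exists hc h; exists w.
pose W x := proj1_sig (constructive_indefinite_description _ (hW x)).
have HW x : ~ rel_skel n n x -> simplex_filler n c x (W x).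
  by rewrite /W; case: constructive_indefinite_description.
have [c_P [c_a [c_p c_nat]]] := hc.
exists (extend_lift n c W); split; last by move=> *; apply: extend_lift_skel.
split.
  move=> m y hU; case: (classic (rel_skel n m y)) => h.
    by rewrite extend_lift_skel //; apply: c_P.
  have [x [t [hx ey]]] := rel_skel_succ_decomp hU h.
  by rewrite (extend_lift_nonskel c W h hx ey); apply: subP_act => //; case: (HW x hx).
split; first by move=> m s; rewrite extend_lift_skel ?c_a //; left; exists s.
split.
  move=> m y hU; case: (classic (rel_skel n m y)) => h.
    by rewrite extend_lift_skel // c_p.
  have [x [t [hx ey]]] := rel_skel_succ_decomp hU h.
  by rewrite (extend_lift_nonskel c W h hx ey) p_nat (HW x hx).2.1 ey b_nat.
move=> l m g y hU; case: (classic (rel_skel n m y)) => h.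
  by rewrite !extend_lift_skel ?c_nat //; apply: rel_skel_act.
have [x [t [hx ey]]] := rel_skel_succ_decomp hU h.
rewrite (extend_lift_nonskel c W h hx ey) -gact_comp.
have ey2 : sact T l m g y = sact T l n (dcomp t g) x by rewrite ey sact_comp.
case: (classic (rel_skel n l (sact T l m g y))) => h2.
  by rewrite extend_lift_skel // ey2 (HW x hx).2.2 // -ey2.
exact: extend_lift_nonskel.
Qed.

Fixpoint lift_seq n : {c | partial_lift n c} :=
  match n with
  | 0 => exist _ lift_on_S partial_lift0
  | n'.+1 => let h := constructive_indefinite_description _
                        (partial_lift_succ (proj2_sig (lift_seq n'))) in
             exist _ (proj1_sig h) (proj1 (proj2_sig h))
  end.

Lemma lift_seq_succ n m y : rel_skel n m y ->
  sval (lift_seq n.+1) m y = sval (lift_seq n) m y.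
Proof. by move=> h /=; case: constructive_indefinite_description => c' [_ /= ->]. Qed.

Lemma lift_seq_stable n n' m y : n <= n' -> rel_skel n m y ->
  sval (lift_seq n') m y = sval (lift_seq n) m y.
Proof.
elim: n' => [|n' IH] hn hU; first by move: hn; rewrite leqn0 => /eqP ->.
case: (ltnP n n'.+1) => h; last by have -> : n = n'.+1 by apply/eqP; rewrite eqn_leq hn h.
have hn' : n <= n' by rewrite -ltnS.
by rewrite lift_seq_succ ?IH //; apply: rel_skel_mono hU.
Qed.

(* On [m]-simplices the lift is read off at stage [m.+1], where all of them lie
   in the relative skeleton. *)
Theorem relative_lift : exists c : forall n, T n -> gob G n,
  (forall l m (g : Dmap l m) y, c l (sact T l m g y) = gact G g (c m y)) /\
  (forall m y, PG m (c m y)) /\ (forall m s, c m (alpha m s) = a m s) /\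
  (forall m y, p m (c m y) = b m y).
Proof.
exists (fun m y => sval (lift_seq m.+1) m y); split.
  move=> l m g y.
  have h1 : l.+1 <= l.+1 + m.+1 by apply: leq_addr.
  have h2 : m.+1 <= l.+1 + m.+1 by apply: leq_addl.
  rewrite -(lift_seq_stable h1 (rel_skel_dim _)) -(lift_seq_stable h2 (rel_skel_dim _)).
  case: (lift_seq (l.+1 + m.+1)) => c [_ [_ [_ c_nat]]] /=.
  by apply: c_nat; apply: rel_skel_mono h2 (rel_skel_dim _).
split; first by move=> m y; case: (lift_seq m.+1) => c [c_P _] /=; apply: c_P; apply: rel_skel_dim.
split; first by move=> m s; case: (lift_seq m.+1) => c [_ [c_a _]] /=.
by move=> m y; case: (lift_seq m.+1) => c [_ [_ [c_p _]]] /=; apply: c_p; apply: rel_skel_dim.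
Qed.

End RelativeLift.

(** * The complexes A(S) *)

Definition level_sgrp (A : scx) d : sgrp :=
  SGrp (cob A d) (cact A d) (cact_sub A d) (cact_id A d) (cact_comp A d).

Lemma level_acyclic (A : scx) d :
  scx_level_contractible A d -> moore_acyclic (@full_sub (level_sgrp A d)).
Proof.
move=> [h0 hS]; split.
  move=> x _; have [y [hy1 hy2]] := h0 x.
  exists y; split => //; split; first by apply: (hy1 (inord 0)); rewrite inordK.
  rewrite -hy2 /dface /coface /=; congr (cact _ _ _ _ (face _) _).
  by apply: val_inj; rewrite /= inordK.
move=> k x _ hx.
have hx' (i : 'I_k.+2) : cact A d k k.+1 (face i) x = 0%R.
  by have := hx i (ltn_ord i); rewrite /dface /coface /= inord_val.
have [y [hy1 hy2]] := hS k x hx'.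
exists y; split => //; split.
  move=> i hi; have hi3 : i < k.+3 by lia.
  by have := hy1 (inord i); rewrite inordK //; apply.
rewrite -hy2 /dface /coface /=; congr (cact _ _ _ _ (face _) _).
by apply: val_inj; rewrite /= inordK.
Qed.

Definition level_map (A B : scx) (f : scmap A B) d :
  forall n, gob (level_sgrp A d) n -> gob (level_sgrp B d) n := f d.

Definition level_dif (A : scx) d :
  forall n, gob (level_sgrp A d) n -> gob (level_sgrp A d.+1) n := cdif A d.

Arguments level_map {A B} f d : rename.
Arguments level_dif : clear implicits.

Lemma level_map_sub A B (f : scmap A B) d n x y :
  level_map f d n (x - y)%R = (level_map f d n x - level_map f d n y)%R.
Proof. exact: scf_sub. Qed.

Lemma level_map_nat A B (f : scmap A B) d m n (g : Dmap m n) x :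
  level_map f d m (gact _ g x) = gact _ g (level_map f d n x).
Proof. exact: scf_nat. Qed.

Lemma level_dif_sub A d n x y :
  level_dif A d n (x - y)%R = (level_dif A d n x - level_dif A d n y)%R.
Proof. exact: cdif_sub. Qed.

Lemma level_dif_nat A d m n (g : Dmap m n) x :
  level_dif A d m (gact _ g x) = gact _ g (level_dif A d n x).
Proof. exact: cdif_nat. Qed.

Definition Delta (n : nat) : sset.
refine (@SSet (fun m => Dmap m n) (fun l m g t => dcomp t g) _ _).
- by move=> m t; apply: dmap_eq => i; rewrite /dcomp /did /= !ffunE.
- by move=> l m k g f t; apply: dmap_eq => i; rewrite /dcomp /= !ffunE.
Defined.

Section Complexes.
Variable C : scx.

Lemma cact0 d m n (g : Dmap m n) : cact C d m n g 0%R = 0%R.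
Proof. exact: sub_morph0 (cact_sub C d m n g). Qed.

Lemma cactD d m n (g : Dmap m n) x y :
  cact C d m n g (x + y)%R = (cact C d m n g x + cact C d m n g y)%R.
Proof. exact: sub_morphD (cact_sub C d m n g) x y. Qed.

Lemma cdif0 d n : cdif C d n 0%R = 0%R.
Proof. exact: sub_morph0 (cdif_sub C d n). Qed.

Lemma cdifD d n x y : cdif C d n (x + y)%R = (cdif C d n x + cdif C d n y)%R.
Proof. exact: sub_morphD (cdif_sub C d n) x y. Qed.

End Complexes.

Lemma fibprod_bdry_of_eq0 (A B : scx) (f : scmap A B) (S T : sset) (alpha : smap S T) d
    (q : pc (fibprod f alpha) d) :
  peq q (pzero _ d) -> pbdry q.
Proof.
case: d q => [//|d] [q1 q2] [/= e1 e2].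
exists (fun n x => 0%R, fun n x => 0%R); split.
  split; first by move=> m n g t; rewrite cact0.
  split; first by move=> m n g t; rewrite cact0.
  by move=> n t; rewrite /ofSmap /precomp /= (sub_morph0 (scf_sub _ _ f d n)).
by split => n t /=; rewrite cdif0 ?e1 ?e2.
Qed.

Section Main.
Unset Implicit Arguments.
Variables (A B : scx) (f : scmap A B).
Hypothesis f_qiso : forall n, quasi_iso (@levelmap A B f n).
Hypothesis f_surj : forall S : sset, psurj (@ofSmap A B f S).
Hypothesis AB_contr : forall d, scx_level_contractible A d /\ scx_level_contractible B d.
Set Implicit Arguments.

Lemma f0 d n : f d n 0%R = 0%R.
Proof. exact: sub_morph0 (scf_sub _ _ f d n). Qed.

Lemma fD d n x y : f d n (x + y)%R = (f d n x + f d n y)%R.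
Proof. exact: sub_morphD (scf_sub _ _ f d n) x y. Qed.

(* Surjectivity on [B(Delta^n)], evaluated at the top simplex. *)
Lemma level_surj d n (z : cob B d n) : exists x, f d n x = z.
Proof.
have hn : cnatural (fun m (t : Delta n m) => cact B d m n t z).
  by move=> l m g t; rewrite /= cact_comp.
have [x [_ hx]] := f_surj (Delta n) d (fun m (t : Delta n m) => cact B d m n t z) hn.
by exists (x n (did n)); have := hx n (did n); rewrite /ofSmap /= cact_id.
Qed.

(* Levelwise, [ker f] is acyclic: a surjective quasi-isomorphism has acyclic kernel. *)
Lemma level_ker_cocycle0 n (x : cob A 0 n) :
  cdif A 0 n x = 0%R -> f 0 n x = 0%R -> x = 0%R.
Proof. by move=> h1 h2; apply: ((f_qiso n).1 0 x (conj I h1) h2). Qed.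

Lemma level_ker_cocycle d n (x : cob A d.+1 n) :
  cdif A d.+1 n x = 0%R -> f d.+1 n x = 0%R ->
  exists u, f d n u = 0%R /\ cdif A d n u = x.
Proof.
move=> h1 h2.
have [u' [_ hu']] : exists u', True /\ cdif A d n u' = x.
  apply: ((f_qiso n).1 d.+1 x (conj I h1)).
  by exists 0%R; split => //; rewrite /= /levelmap h2 cdif0.
have cyc : pcycle (C := level B n) (f d n u') by split => //; rewrite /= -scf_dif hu' h2.
have [v [[_ hv] hvu]] := (f_qiso n).2 d (f d n u') cyc.
have {}hv : cdif A d n v = 0%R := hv.
move: hvu; rewrite /levelmap.
case: d x h1 h2 u' hu' cyc v hv => [|d] x h1 h2 u' hu' cyc v hv /= hvu.
  exists (u' - v)%R; split; first by rewrite scf_sub -opprB hvu oppr0.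
  by rewrite cdif_sub hu' hv subr0.
case: hvu => r [_ hr]; have [r' hr'] := level_surj r.
exists (u' - v + cdif A d n r')%R; split.
  by rewrite fD scf_sub scf_dif hr' hr addrC addrA subrK subrr.
by rewrite cdifD cdif_sub hu' hv cdif2 !subr0 addr0.
Qed.

(* [kerf d] is (ker f)^d and [kerf_cocycle d] is Z^d(ker f). *)
Definition kerf d := kerP (level_map f d) (@full_sub _).
Arguments kerf d n x : clear implicits.
Definition kerf_cocycle d := kerP (level_dif A d) (kerf d).
Arguments kerf_cocycle d n x : clear implicits.

Lemma kerf_closed d : sub_closed (kerf d).
Proof.
exact: (kerP_closed (@level_map_sub _ _ f d) (@level_map_nat _ _ f d) (full_sub_closed _)).
Qed.

Lemma kerf_acyclic d : moore_acyclic (kerf d).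
Proof.
apply: (kerP_acyclic (@level_map_sub _ _ f d) (@level_map_nat _ _ f d) (full_sub_closed _)
          (QH := @full_sub (level_sgrp B d)) (fun _ _ _ => I)).
- by move=> n y _; have [x hx] := level_surj y; exists x.
- exact: level_acyclic (AB_contr d).1.
- exact: level_acyclic (AB_contr d).2.
Qed.

Lemma cdif_onto_kerf_cocycle d n (y : cob A d.+1 n) : kerf_cocycle d.+1 n y ->
  exists x, kerf d n x /\ cdif A d n x = y.
Proof.
by move=> [[_ h1] h2]; have [u [hu1 hu2]] := level_ker_cocycle h2 h1; exists u.
Qed.

(* [Z^(d+1)(ker f)] is the quotient of [(ker f)^d] by [Z^d(ker f)], and
   [Z^0(ker f)] vanishes. *)
Lemma kerf_cocycle_acyclic d : moore_acyclic (kerf_cocycle d).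
Proof.
elim: d => [|d IH].
  apply: trivial_sub_acyclic.
    exact: (kerP_closed (@level_dif_sub A 0) (@level_dif_nat A 0) (kerf_closed 0)).
  by move=> n x [[_ h1] h2]; apply: level_ker_cocycle0.
apply: (quotient_acyclic (@level_dif_sub A d) (@level_dif_nat A d) (kerf_closed d)
          (QH := kerf_cocycle d.+1)).
- move=> n x [_ h1]; split; first split => //.
    by move: h1; rewrite /level_map /level_dif scf_dif => ->; rewrite cdif0.
  exact: cdif2.
- exact: cdif_onto_kerf_cocycle.
- exact: kerf_acyclic.
- exact: IH.
Qed.

Section Injection.
Variables (S T : sset) (alpha : smap S T).
Hypothesis alpha_inj : sinjective S T alpha.

Lemma gapmap_surj : psurj (@gapmap A B f S T alpha).
Proof.
move=> d [p1 p2] [n1 [n2 hp]].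
have hs n (y : gob (level_sgrp B d) n) : full_sub y ->
    exists x, full_sub x /\ level_map f d n x = y.
  by move=> _; have [x hx] := level_surj y; exists x.
have [c [c_nat [_ [c_a c_f]]]] :=
  relative_lift (@level_map_sub _ _ f d) (@level_map_nat _ _ f d)
    (full_sub_closed _) hs (kerf_acyclic d) alpha_inj
    (a := p1) n1 (fun _ _ => I) (b := p2) n2 (fun _ _ => I) hp.
by exists c.
Qed.

Lemma rel_ker_cocycle d (z : cochain A T d.+1) : cnatural z ->
  (forall n x, z n (alpha n x) = 0%R) -> (forall n x, f d.+1 n (z n x) = 0%R) ->
  (forall n x, cdif A d.+1 n (z n x) = 0%R) ->
  exists w : cochain A T d, cnatural w /\ (forall n x, w n (alpha n x) = 0%R) /\
    (forall n x, f d n (w n x) = 0%R) /\ (forall n x, cdif A d n (w n x) = z n x).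
Proof.
move=> z_nat z_S z_f z_dif.
have zero_nat m n (g : Dmap m n) (x : S n) :
    (0 : cob A d m)%R = gact (level_sgrp A d) g (0 : cob A d n)%R.
  by rewrite gact0.
have zero_kerf n (x : S n) : kerf d n 0%R by split => //; apply: f0.
have z_cocycle n x : kerf_cocycle d.+1 n (z n x).
  by split; first split; [done | apply: z_f | apply: z_dif].
have zero_z n x : level_dif A d n 0%R = z n (alpha n x) by rewrite z_S /level_dif cdif0.
have [w [w_nat [w_kerf [w_S w_dif]]]] :=
  relative_lift (@level_dif_sub A d) (@level_dif_nat A d) (kerf_closed d)
    (@cdif_onto_kerf_cocycle d) (kerf_cocycle_acyclic d) alpha_inj
    (a := fun n _ => 0%R) zero_nat zero_kerf (b := z) z_nat z_cocycle zero_z.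
exists w; do 3!split => //.
by move=> n x; case: (w_kerf n x).
Qed.

Lemma gapmap_cohom_inj d (x : pc (ofS A T) d) :
  pcycle x -> pbdry (gapmap f alpha x) -> pbdry x.
Proof.
case: d x => [|d] x [x_nat x_cyc] hb.
  by move=> n t; apply: level_ker_cocycle0; [apply: x_cyc | apply: hb.2].
have {}x_cyc n t : cdif A d.+1 n (x n t) = 0%R := x_cyc n t.
case: hb => [[p1 p2] [p_in [e1 e2]]].
have [c [c_nat [c_S c_f]]] := gapmap_surj p_in.
have {}c_S n t : c n (alpha n t) = p1 n t := c_S n t.
have {}c_f n t : f d n (c n t) = p2 n t := c_f n t.
have {}e1 n t : cdif A d n (p1 n t) = x n (alpha n t) := e1 n t.
have {}e2 n t : cdif B d n (p2 n t) = f d.+1 n (x n t) := e2 n t.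
pose z n t := (x n t - cdif A d n (c n t))%R.
have z_nat : cnatural z by move=> m n g t; rewrite /z x_nat c_nat cdif_nat cact_sub.
have z_S n t : z n (alpha n t) = 0%R by rewrite /z c_S -e1 subrr.
have z_f n t : f d.+1 n (z n t) = 0%R by rewrite /z scf_sub scf_dif c_f e2 subrr.
have z_dif n t : cdif A d.+1 n (z n t) = 0%R by rewrite /z cdif_sub cdif2 x_cyc subrr.
have [w [w_nat [_ [_ w_dif]]]] := rel_ker_cocycle z_nat z_S z_f z_dif.
exists (fun n t => c n t + w n t)%R; split; first by move=> m n g t; rewrite c_nat w_nat cactD.
by move=> n t; rewrite /= cdifD w_dif /z addrC subrK.
Qed.

(* Lift a cocycle of the fibre product to [A(T)], then correct the lift by a
   relative kernel cochain killing its coboundary. *)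
Lemma gapmap_cohom_surj d (q : pc (fibprod f alpha) d) : pcycle q ->
  exists x : pc (ofS A T) d, pcycle x /\ pbdry (psub (gapmap f alpha x) q).
Proof.
case: q => p1 p2 [[n1 [n2 hp]] [q_cyc1 q_cyc2]].
have [c [c_nat [c_S c_f]]] := gapmap_surj (conj n1 (conj n2 hp)).
have {}c_S n t : c n (alpha n t) = p1 n t := c_S n t.
have {}c_f n t : f d n (c n t) = p2 n t := c_f n t.
have {}q_cyc1 n t : cdif A d n (p1 n t) = 0%R := q_cyc1 n t.
have {}q_cyc2 n t : cdif B d n (p2 n t) = 0%R := q_cyc2 n t.
pose z n t := cdif A d n (c n t).
have z_nat : cnatural z by move=> m n g t; rewrite /z c_nat cdif_nat.
have z_S n t : z n (alpha n t) = 0%R by rewrite /z c_S q_cyc1.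
have z_f n t : f d.+1 n (z n t) = 0%R by rewrite /z scf_dif c_f q_cyc2.
have z_dif n t : cdif A d.+1 n (z n t) = 0%R by rewrite /z cdif2.
have [w [w_nat [w_S [w_f w_dif]]]] := rel_ker_cocycle z_nat z_S z_f z_dif.
exists (fun n t => c n t - w n t)%R; split.
  split; first by move=> m n g t; rewrite c_nat w_nat cact_sub.
  by move=> n t; rewrite /= cdif_sub w_dif subrr.
apply: fibprod_bdry_of_eq0; split => n t /=.
  by rewrite /precomp w_S c_S subr0 subrr.
by rewrite /ofSmap scf_sub w_f subr0 c_f subrr.
Qed.

End Injection.
End Main.

Theorem lemma3p4p7 (A B : scx) (f : scmap A B) :
  (forall n, quasi_iso (@levelmap A B f n)) ->
  (forall S : sset, psurj (@ofSmap A B f S)) ->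
  (forall d, scx_level_contractible A d /\ scx_level_contractible B d) ->
  forall (S T : sset) (alpha : smap S T), sinjective S T alpha ->
    psurj (@gapmap A B f S T alpha) /\ quasi_iso (@gapmap A B f S T alpha).
Proof.
move=> f_qiso f_surj AB_contr S T alpha alpha_inj.
split; first exact: gapmap_surj.
by split; [apply: gapmap_cohom_inj | apply: gapmap_cohom_surj].
Qed.
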